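(* Let $S\subseteq\mathbb{N}[x]^n$. Then the set of minimal elements of $S$ with respect to the partial order $\preceq$ is finite.
   Context: For $f=\sum_{i}f_ix^i,g=\sum_ig_ix^i\in\mathbb{N}[x]$, with coefficients padded by zeros up to a common index $K$ exceeding both degrees, $f\preceq g$ iff $\sum_{j=i}^Kf_j\le\sum_{j=i}^Kg_j$ for all $i=0,\ldots,K$. For $\mathbf{u}=(u_1,\ldots,u_n),\mathbf{v}=(v_1,\ldots,v_n)\in\mathbb{N}[x]^n$, $\mathbf{u}\preceq\mathbf{v}$ iff $u_i\preceq v_i$ for all $i$. *)

From HB Require Import structures.
From mathcomp Require Import all_boot all_order all_algebra.
Set Implicit Arguments. Unset Strict Implicit. Unset Printing Implicit Defensive.
Import GRing.Theory.

(* Polynomials in N[x] are elements of {poly nat}; p`_j is the j-th coefficient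
   (zero beyond the degree).  K := maxn (size f) (size g) exceeds both degrees
   (size = degree + 1); the comparison does not depend on the choice of such K. *)
Definition tail_sum (f : {poly nat}) (K i : nat) : nat :=
  (\sum_(i <= j < K.+1) (f`_j)%R)%N.

Definition poly_le (f g : {poly nat}) : Prop :=
  let K := maxn (size f) (size g) in
  forall i, (i <= K)%N -> (tail_sum f K i <= tail_sum g K i)%N.

Definition vec_le (n : nat) (u v : {ffun 'I_n -> {poly nat}}) : Prop :=
  forall i : 'I_n, poly_le (u i) (v i).

Definition is_minimal (n : nat) (S : {ffun 'I_n -> {poly nat}} -> Prop)
  (u : {ffun 'I_n -> {poly nat}}) : Prop :=
  S u /\ forall v, S v -> vec_le v u -> v = u.

From mathcomp Require Import all_boot all_order all_algebra.
From mathcomp Require Import zify.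
From Stdlib Require Import Classical ClassicalEpsilon.

(* The order on N[x] compares the tail sums T_j(p) = p_j + p_(j+1) + ...
   pointwise, and the theorem follows once this order (hence its n-fold product)
   is a well-quasi-order: the minimal elements of S form an antichain.  The
   tail-sum sequence of p is nonincreasing.  Given a sequence p_0, p_1, ..., either
   some p_k dominates p_0, or every p_k has T_R(p_k) < C := T_0(p_0) where
   R := size p_0.  A nonincreasing sequence whose values beyond R lie below C is
   determined, order-faithfully, by finitely many numbers: its first R values and,
   for each threshold m < C, the number of indices j >= R with T_j > m.  Dickson's
   lemma on N^(R+C) concludes. *)

Set Implicit Arguments. Unset Strict Implicit.

Section WellQuasiOrders.
Variable T : Type.

Definition wqo (D : T -> Prop) (R : T -> T -> Prop) :=
  forall f : nat -> T, (forall k, D (f k)) ->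
  exists i j, (i < j)%N /\ R (f i) (f j).

Definition wqo_chain (D : T -> Prop) (R : T -> T -> Prop) :=
  forall f : nat -> T, (forall k, D (f k)) ->
  exists phi : nat -> nat, {homo phi : i j / (i < j)%N} /\
    forall i j, (i < j)%N -> R (f (phi i)) (f (phi j)).

Lemma wqo_chainW D R : wqo_chain D R -> wqo D R.
Proof.
move=> chainR f Df; have [phi [phi_incr Rphi]] := chainR f Df.
by exists (phi 0), (phi 1); split; [exact: phi_incr | exact: Rphi].
Qed.

Lemma wqo_eventually_extendable D R f : wqo D R -> (forall k, D (f k)) ->
  exists N, forall i, (N <= i)%N -> exists j, (i < j)%N /\ R (f i) (f j).
Proof.
move=> wqoR Df; apply: NNPP => noN.
(* Otherwise the dead-end indices below would form a bad subsequence. *)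
have dead N : exists i, (N <= i)%N /\ forall j, (i < j)%N -> ~ R (f i) (f j).
  apply: NNPP => nodead; apply: noN; exists N => i Ni; apply: NNPP => noj.
  by apply: nodead; exists i; split => // j ij Rij; apply: noj; exists j.
have [next Hnext] := ClassicalEpsilon.choice _ dead.
pose idx k := iter k (fun i => next i.+1) (next 0).
have idx_dead k j : (idx k < j)%N -> ~ R (f (idx k)) (f j).
  by case: k => [|k]; apply: (Hnext _).2.
have idx_incr : {homo idx : i j / (i < j)%N}.
  by apply: homo_ltn ltn_trans _ => k; exact: (Hnext _).1.
have [i [j [ij Rij]]] := wqoR (f \o idx) (fun k => Df _).
exact: idx_dead (idx_incr _ _ ij) Rij.
Qed.

Lemma trans_wqo_chain D R : (forall x y z, R x y -> R y z -> R x z) ->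
  wqo D R -> wqo_chain D R.
Proof.
move=> transR wqoR f Df; have [N extN] := wqo_eventually_extendable wqoR Df.
have step i : exists j, (N <= i)%N -> (i < j)%N /\ R (f i) (f j).
  case: (leqP N i) => [/extN[j Hj] | _]; first by exists j.
  by exists 0.
have [next Hnext] := ClassicalEpsilon.choice _ step.
pose phi k := iter k next N.
have phiN k : (N <= phi k)%N.
  by elim: k => //= k IH; exact: leq_trans IH (ltnW (Hnext _ IH).1).
exists phi; split.
  by apply: homo_ltn ltn_trans _ => k; exact: (Hnext _ (phiN k)).1.
apply: (homo_ltn (fun y x z => transR (f (phi x)) (f (phi y)) (f (phi z)))).
by move=> k; exact: (Hnext _ (phiN k)).2.
Qed.

Lemma wqo_chainI D (R1 R2 R : T -> T -> Prop) :
  wqo_chain D R1 -> wqo_chain D R2 ->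
  (forall x y, R1 x y -> R2 x y -> R x y) -> wqo_chain D R.
Proof.
move=> chain1 chain2 R12 f Df; have [phi [phi_incr R1phi]] := chain1 f Df.
have [psi [psi_incr R2psi]] := chain2 (f \o phi) (fun k => Df _).
exists (phi \o psi); split => [i j ij | i j ij]; first exact/phi_incr/psi_incr.
by apply: R12; [exact/R1phi/psi_incr | exact: R2psi].
Qed.

Lemma wqo_chain_all D (I : eqType) (Ri : I -> T -> T -> Prop) (s : seq I) :
  (forall i x y z, Ri i x y -> Ri i y z -> Ri i x z) ->
  (forall i, wqo D (Ri i)) ->
  wqo_chain D (fun x y => forall i, i \in s -> Ri i x y).
Proof.
move=> transRi wqoRi; elim: s => [|a s IHs].
  by move=> f _; exists id; split => // i j _ k; rewrite in_nil.
apply: wqo_chainI (trans_wqo_chain (transRi a) (wqoRi a)) IHs _ => x y Ra Rs i.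
by rewrite in_cons => /predU1P[-> | /Rs].
Qed.

End WellQuasiOrders.

Lemma wqo_pullback T U (D : T -> Prop) (E : U -> Prop) R (R' : U -> U -> Prop)
    (g : T -> U) :
  wqo E R' -> (forall x, D x -> E (g x)) ->
  (forall x y, D x -> R' (g x) (g y) -> R x y) -> wqo D R.
Proof.
move=> wqoR' DE R'R f Df.
have [i [j [ij Rij]]] := wqoR' (g \o f) (fun k => DE _ (Df k)).
by exists i, j; split => //; exact: R'R (Df i) Rij.
Qed.

Lemma wqo_pointwise (I : finType) T (R : T -> T -> Prop) :
  (forall x y z, R x y -> R y z -> R x z) -> wqo (fun _ => True) R ->
  wqo (fun _ : I -> T => True) (fun x y => forall i, R (x i) (y i)).
Proof.
move=> transR wqoR.
have chainR := @wqo_chain_all (I -> T) (fun _ => True) I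
  (fun i x y => R (x i) (y i)) (enum I).
apply: (wqo_pullback (g := id) (wqo_chainW (chainR _ _))) => // [i x y z | i | x y _ Rxy i].
- exact: transR.
- exact: (wqo_pullback (g := fun x : I -> T => x i) wqoR).
- by apply: Rxy; rewrite mem_enum.
Qed.

Lemma wqo_leq : wqo (fun _ : nat => True) (fun m n => m <= n)%N.
Proof.
suff bounded v f : (f 0 <= v)%N -> exists i j, (i < j)%N /\ (f i <= f j)%N.
  by move=> f _; exact: bounded (leqnn _).
elim: v f => [|v IHv] f f0v; first by exists 0, 1; split; last exact: leq_trans f0v _.
case: (leqP (f 0) (f 1)) => [f01 | f10]; first by exists 0, 1.
have [i [j [ij fij]]] := IHv (fun k => f k.+1) (leq_trans f10 f0v).
by exists i.+1, j.+1.
Qed.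

Lemma dickson m : wqo (fun _ : 'I_m -> nat => True) (fun x y => forall i, x i <= y i)%N.
Proof. by apply: wqo_pointwise wqo_leq => x y z; exact: leq_trans. Qed.

Section CountingSums.
Variables (b : nat -> bool) (R : nat).

Lemma sum_bool_le_stop j N : (forall i, (j <= i)%N -> b i = false) ->
  (\sum_(R <= i < N) b i <= minn j N - R)%N.
Proof.
move=> bj; elim: N => [|N IHN]; first by rewrite big_geq.
case: (leqP R N) => [RN | NR]; last by rewrite big_geq.
rewrite big_nat_recr //=; case: (ltnP N j) => [Nj | jN].
  by case: (b N); lia.
by rewrite bj //; lia.
Qed.

Lemma sum_bool_ge_run j N : (R <= j < N)%N ->
  (forall i, (R <= i <= j)%N -> b i) -> (j.+1 - R <= \sum_(R <= i < N) b i)%N.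
Proof.
move=> /andP[Rj jN] bRj.
rewrite (big_cat_nat (leqW Rj) jN) /=; apply: leq_trans (leq_addr _ _).
rewrite (eq_big_nat _ _ (F2 := fun=> 1%N)) ?sum_nat_const_nat ?muln1 //.
by move=> i /andP[Ri ij]; rewrite bRj // Ri -ltnS.
Qed.

End CountingSums.

Definition tail (j : nat) (p : {poly nat}) : nat := (\sum_(j <= i < size p) (p`_i)%R)%N.

Definition tail_le (p q : {poly nat}) := forall j, (tail j p <= tail j q)%N.

Lemma tail_le_trans (p q r : {poly nat}) : tail_le p q -> tail_le q r -> tail_le p r.
Proof. by move=> pq qr j; exact: leq_trans (pq j) (qr j). Qed.

Lemma tail_eq0 j (p : {poly nat}) : (size p <= j)%N -> tail j p = 0.
Proof. by move=> pj; rewrite /tail big_geq. Qed.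

Lemma leq_tail (p : {poly nat}) j j' : (j' <= j)%N -> (tail j p <= tail j' p)%N.
Proof.
move=> j'j; case: (leqP j (size p)) => [jp | pj]; last by rewrite tail_eq0 // ltnW.
by rewrite /tail (big_cat_nat j'j jp) leq_addl.
Qed.

Lemma sum_coef_eq0 (p : {poly nat}) a b : (size p <= a)%N ->
  (\sum_(a <= j < b) (p`_j)%R)%N = 0.
Proof.
move=> pa; rewrite big_nat_cond big1 // => j /andP[/andP[aj _] _].
exact/nth_default/(leq_trans pa aj).
Qed.

Lemma tail_sumE (p : {poly nat}) K i : (size p <= K.+1)%N -> tail_sum p K i = tail i p.
Proof.
move=> pK; rewrite /tail_sum /tail; case: (leqP i (size p)) => [ip | pi].
  by rewrite (big_cat_nat ip pK) /= (sum_coef_eq0 _ (leqnn (size p))) addn0.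
by rewrite [RHS]big_geq ?sum_coef_eq0 // ltnW.
Qed.

Lemma poly_le_tail_le (p q : {poly nat}) : tail_le p q -> poly_le p q.
Proof.
move=> le_pq; rewrite /poly_le /= => i _; rewrite !tail_sumE //.
  exact: leq_trans (leq_maxr _ _) (leqnSn _).
exact: leq_trans (leq_maxl _ _) (leqnSn _).
Qed.

Lemma not_tail_le_lt (p q : {poly nat}) : ~ tail_le p q -> (tail (size p) q < tail 0 p)%N.
Proof.
move=> /not_all_ex_not[r /negP]; rewrite -ltnNge => qr_lt_pr.
have rp : (r < size p)%N.
  by rewrite ltnNge; apply: contraTN qr_lt_pr => /tail_eq0->.
exact: leq_ltn_trans (leq_tail _ (ltnW rp)) (leq_trans qr_lt_pr (leq_tail _ (leq0n r))).
Qed.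

(* For k >= R the code counts the indices j >= R with tail j p > k - R: on a
   nonincreasing sequence these counts determine the values beyond R. *)
Definition tail_code (R : nat) (p : {poly nat}) (k : nat) : nat :=
  if (k < R)%N then tail k p
  else (\sum_(R <= j < size p) (k - R < tail j p))%N.

Lemma tail_code_le R C (p q : {poly nat}) : (tail R p < C)%N ->
  (forall k, k < R + C -> tail_code R p k <= tail_code R q k)%N -> tail_le p q.
Proof.
move=> pC codepq j; case: (ltnP j R) => [jR | Rj].
  by have := codepq j (ltn_addr _ jR); rewrite /tail_code jR.
case pj: (tail j p) => [// | m].
have mC : (m < C)%N.
  by apply: leq_ltn_trans pC; apply: leq_trans (leq_tail p Rj); rewrite pj.
have := codepq (R + m); rewrite ltn_add2l mC /tail_code ltnNge leq_addr addKn.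
move=> /(_ isT) code_m.
have jp : (j < size p)%N by rewrite ltnNge; apply: contraTN isT => /tail_eq0; rewrite pj.
have count_p : (j.+1 - R <= \sum_(R <= i < size p) (m < tail i p))%N.
  apply: sum_bool_ge_run => [|i /andP[_ ij]]; first by rewrite Rj jp.
  by rewrite -pj; exact: leq_tail.
rewrite leqNgt; apply/negP => qj.
have count_q : (\sum_(R <= i < size q) (m < tail i q) <= minn j (size q) - R)%N.
  apply: sum_bool_le_stop => i ji; apply/negbTE; rewrite -leqNgt.
  by apply: leq_trans (leq_tail q ji) _; rewrite -ltnS.
have := leq_trans count_p (leq_trans code_m count_q); lia.
Qed.

Lemma wqo_tail_le : wqo (fun _ => True) tail_le.
Proof.
move=> f _.
case: (classic (exists j, 0 < j /\ tail_le (f 0) (f j))%N) => [[j [j0 le0j]] | none].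
  by exists 0, j.
pose R := size (f 0); pose C := tail 0 (f 0).
have below k : (tail R (f k.+1) < C)%N.
  by apply: not_tail_le_lt => le0k; apply: none; exists k.+1.
have wqo_below : wqo (fun p => tail R p < C)%N tail_le.
  apply: (wqo_pullback (g := fun p (k : 'I_(R + C)) => tail_code R p k) (@dickson _)) => //.
  by move=> p q pC codepq; apply: tail_code_le pC _ => k kRC; exact: (codepq (Ordinal kRC)).
have [i [j [ij leij]]] := wqo_below (fun k => f k.+1) below.
by exists i.+1, j.+1.
Qed.

Lemma wqo_vec_le n : wqo (fun _ => True) (@vec_le n).
Proof.
apply: (wqo_pullback (g := fun u : {ffun 'I_n -> {poly nat}} => fun i => u i)
  (wqo_pointwise tail_le_trans wqo_tail_le)) => // u v _ le_uv i.
exact: poly_le_tail_le.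
Qed.

Lemma wqo_antichain_finite (T : eqType) (R : T -> T -> Prop) (P : T -> Prop) :
  wqo (fun _ => True) R -> (forall x y, P x -> P y -> R x y -> x = y) ->
  exists s : seq T, forall x, P x -> x \in s.
Proof.
move=> wqoR antichainP; apply: NNPP => infinite.
have fresh (s : seq T) : exists x, P x /\ x \notin s.
  apply: NNPP => no_fresh; apply: infinite; exists s => x Px.
  by case: (boolP (x \in s)) => // xs; case: no_fresh; exists x.
have [pick Hpick] := ClassicalEpsilon.choice _ fresh.
pose hist k := iter k (fun s => pick s :: s) [::].
pose f k := pick (hist k).
have f_hist i j : (i < j)%N -> f i \in hist j.
  elim: j => // j IHj; rewrite ltnS leq_eqVlt /= in_cons.
  by case/predU1P => [-> | /IHj->]; rewrite ?eqxx ?orbT.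
have [i [j [ij Rij]]] := wqoR f (fun _ => I).
have fij : f i = f j := antichainP _ _ (Hpick _).1 (Hpick _).1 Rij.
by have := f_hist _ _ ij; rewrite fij; apply/negP; exact: (Hpick _).2.
Qed.

Theorem lemma4p9 (n : nat) (S : {ffun 'I_n -> {poly nat}} -> Prop) :
  exists s : seq {ffun 'I_n -> {poly nat}},
    forall u, is_minimal S u -> u \in s.
Proof.
apply: wqo_antichain_finite (@wqo_vec_le n) _ => u v [Su _] [_ min_v].
exact: min_v Su.
Qed.
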